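(* Let $N\ge3$ and for $1\le k<N/2$ let $s_k=\tan(k\pi/N)$. Then every $s_k$ with $1\le k<N/2$ and $\gcd(k,N)>1$ can be written as a $\mathbb{Q}$-linear combination of the $s_j$ with $1\le j<N/2$ and $\gcd(j,N)=1$.
   Context: The $s_k$ with $\gcd(k,N)=1$ are called primitive star points and those with $\gcd(k,N)>1$ degenerate star points of the regular $N$-gon. *)

From Stdlib Require Import Reals QArith Qreals Arith.
Open Scope R_scope.

Definition star_point (N k : nat) : R := tan (INR k * PI / INR N).

Definition primitive_idx (N j : nat) : bool :=
  (1 <=? j)%nat && (2 * j <? N)%nat && (Nat.gcd j N =? 1)%nat.

(* Write t_M(a) = tan(a pi / M), so s_k = t_N(k).  Since t_N(a) depends only on
   a mod N and is odd in a, every t_N(a) with a prime to N is a primitive star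
   point up to sign.  With d = gcd(k, N) and M = N / d, s_k = t_M(k / d) with
   k / d prime to M, so it suffices to descend from M p to M for a prime p: each
   t_M(a) with a prime to M is a rational combination of the t_{Mp}(b) with b
   prime to M p.

   For odd p this rests on sum_{m<p} tan(y + m pi / p) = p tan(p y), proved with
   roots of unity.  If p | M, taking y = a pi / (M p) writes t_M(a) as an average
   of such values.  If p does not divide M, taking y = b pi / M puts
   t_M(b) - p t_M(p b) in the span, and following the orbit of b under
   multiplication by p modulo M shows that (1 - p^n) t_M(b) is in the span.  For
   p = 2 the identities cot x = tan x + 2 cot 2x and
   tan 2y = (tan(pi/4 + y) - tan(pi/4 - y)) / 2 do the same for M odd,
   M = 0 (mod 4) and M = 2 (mod 4), the last again via an orbit argument. *)

From Stdlib Require Import Reals QArith Qreals.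
From Stdlib Require Import Lra Lia ZArith Znumtheory List Classical.
From Coquelicot Require Import Coquelicot.
Open Scope R_scope.

(** * Roots of unity and the tangent sum *)

Definition cis (t : R) : C := (cos t, sin t).

Lemma cis_add a b : cis (a + b) = Cmult (cis a) (cis b).
Proof.
  unfold cis, Cmult; simpl. rewrite cos_plus, sin_plus.
  apply injective_projections; simpl; ring.
Qed.

Lemma cis_0 : cis 0 = RtoC 1.
Proof. unfold cis. rewrite cos_0, sin_0. reflexivity. Qed.

Lemma cis_pow t n : Cpow (cis t) n = cis (INR n * t).
Proof.
  induction n as [|n IHn]; simpl Cpow.
  - rewrite Rmult_0_l, cis_0. reflexivity.
  - rewrite IHn, <- cis_add, S_INR. f_equal. ring.
Qed.

Lemma cis_add_PI t : cis (t + PI) = Copp (cis t).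
Proof. unfold cis. rewrite neg_cos, neg_sin. reflexivity. Qed.

Lemma cis_add_2kPI t k : cis (t + 2 * INR k * PI) = cis t.
Proof. unfold cis. rewrite cos_period, sin_period. reflexivity. Qed.

(* Coquelicot's [sum_n] takes values in an abstract [AbelianMonoid], whose carrier
   [ring] and [field] do not recognise as [C]; [Csum] is [sum_f_R0] over [C]. *)
Fixpoint Csum (f : nat -> C) (n : nat) : C :=
  match n with
  | O => f O
  | S n => Cplus (Csum f n) (f (S n))
  end.

Lemma Csum_ext f g n : (forall i, (i <= n)%nat -> f i = g i) -> Csum f n = Csum g n.
Proof.
  induction n as [|n IHn]; intros H; simpl.
  - apply H. lia.
  - rewrite IHn, H; [reflexivity | lia | intros; apply H; lia].
Qed.

Lemma Csum_plus f g n : Csum (fun i => Cplus (f i) (g i)) n = Cplus (Csum f n) (Csum g n).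
Proof. induction n as [|n IHn]; simpl; [|rewrite IHn]; ring. Qed.

Lemma Csum_mult_l c f n : Csum (fun i => Cmult c (f i)) n = Cmult c (Csum f n).
Proof. induction n as [|n IHn]; simpl; [|rewrite IHn]; ring. Qed.

Lemma Csum_const c n : Csum (fun _ => c) n = Cmult (RtoC (INR (S n))) c.
Proof.
  induction n as [|n IHn]; cbn [Csum].
  - simpl. ring.
  - rewrite IHn, (S_INR (S n)), RtoC_plus. ring.
Qed.

Lemma Csum_swap (f : nat -> nat -> C) n m :
  Csum (fun i => Csum (f i) m) n = Csum (fun j => Csum (fun i => f i j) n) m.
Proof.
  induction n as [|n IHn]; simpl.
  - reflexivity.
  - rewrite IHn, <- Csum_plus. reflexivity.
Qed.

Lemma Csum_only_first f n :
  (forall i, (1 <= i <= n)%nat -> f i = RtoC 0) -> Csum f n = f O.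
Proof.
  induction n as [|n IHn]; intros H; simpl.
  - reflexivity.
  - rewrite IHn, (H (S n)) by (lia || intros; apply H; lia). ring.
Qed.

Lemma Cgeom_sum (z : C) n :
  Cmult (Cminus z 1) (Csum (Cpow z) n) = Cminus (Cpow z (S n)) 1.
Proof. induction n as [|n IHn]; simpl in *; [|rewrite Cmult_plus_distr_l, IHn]; ring. Qed.

Lemma Cmult_eq_0_r (a b : C) : a <> RtoC 0 -> Cmult a b = RtoC 0 -> b = RtoC 0.
Proof.
  intros Ha E. replace b with (Cmult (Cinv a) (Cmult a b)) by (field; exact Ha).
  rewrite E. ring.
Qed.

Lemma cis_root_of_unity_neq1 p k : (0 < k < p)%nat -> cis (INR k * (2 * PI / INR p)) <> RtoC 1.
Proof.
  intros Hk E. unfold cis, RtoC in E. injection E as Ec _.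
  set (x := INR k * PI / INR p).
  assert (Hp : INR p <> 0) by (apply not_0_INR; lia).
  replace (INR k * (2 * PI / INR p)) with (2 * x) in Ec by (unfold x; field; exact Hp).
  rewrite cos_2a_sin in Ec.
  destruct (sin_eq_0_0 x) as [j Hj]; [nra|].
  assert (Hkj : INR k = IZR j * INR p).
  { apply Rmult_eq_reg_r with (PI / INR p).
    - transitivity x; [unfold x; field; exact Hp|]. rewrite Hj. field. exact Hp.
    - apply Rmult_integral_contrapositive; split; [apply PI_neq0|].
      apply Rinv_neq_0_compat, Hp. }
  rewrite !INR_IZR_INZ, <- mult_IZR in Hkj. apply eq_IZR in Hkj.
  destruct (Z_le_gt_dec j 0); nia.
Qed.

Lemma sum_roots_of_unity p k : (0 < k < p)%nat ->
  Csum (Cpow (cis (INR k * (2 * PI / INR p)))) (pred p) = RtoC 0.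
Proof.
  intros Hk. set (z := cis _).
  assert (Hz : Cminus z 1 <> RtoC 0).
  { intro E. apply (cis_root_of_unity_neq1 p k Hk). fold z.
    replace z with (Cplus (Cminus z 1) 1) by ring. rewrite E. ring. }
  assert (Hzp : Cpow z p = RtoC 1).
  { unfold z. rewrite cis_pow.
    replace (INR p * (INR k * (2 * PI / INR p))) with (0 + 2 * INR k * PI)
      by (field; apply not_0_INR; lia).
    rewrite cis_add_2kPI, cis_0. reflexivity. }
  assert (G := Cgeom_sum z (pred p)).
  replace (S (pred p)) with p in G by lia. rewrite Hzp in G.
  apply (Cmult_eq_0_r _ _ Hz). rewrite G. ring.
Qed.

(* 1 / (1 + v) = sum_k (-v)^k / (1 + v^p) for odd p, and (-v)^k is split so that
   the dependence on m becomes a power of a root of unity. *)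
Lemma Cinv_one_plus_cis_expand q th m (p := (2 * q + 1)%nat) :
  Cplus 1 (cis (INR p * th)) <> RtoC 0 ->
  Cplus 1 (cis (th + INR m * (2 * PI / INR p))) <> RtoC 0 ->
  Cinv (Cplus 1 (cis (th + INR m * (2 * PI / INR p)))) =
  Cdiv (Csum (fun k => Cmult (cis (INR k * (th + PI)))
                             (Cpow (cis (INR k * (2 * PI / INR p))) m)) (2 * q))
       (Cplus 1 (cis (INR p * th))).
Proof.
  intros H1 H2. set (v := cis (th + INR m * (2 * PI / INR p))) in *.
  assert (Hp : INR p <> 0) by (apply not_0_INR; unfold p; lia).
  rewrite (Csum_ext _ (Cpow (Copp v))).
  2: { intros k _. unfold v. rewrite <- cis_add_PI, !cis_pow, <- cis_add. f_equal. ring. }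
  assert (Hvp : Cpow (Copp v) p = Copp (cis (INR p * th))).
  { unfold v. rewrite <- cis_add_PI, cis_pow.
    replace (INR p * (th + INR m * (2 * PI / INR p) + PI))
      with (INR p * th + 2 * INR (m + q) * PI + PI).
    - rewrite cis_add_PI, cis_add_2kPI. reflexivity.
    - unfold p in *. rewrite plus_INR, mult_INR, plus_INR. simpl INR.
      field. rewrite plus_INR, mult_INR in Hp. exact Hp. }
  assert (G := Cgeom_sum (Copp v) (2 * q)).
  replace (S (2 * q)) with p in G by (unfold p; lia). rewrite Hvp in G.
  assert (Hv : Cminus (Copp v) 1 <> RtoC 0).
  { intro E. apply H2. replace (Cplus 1 v) with (Copp (Cminus (Copp v) 1)) by ring.
    rewrite E. ring. }
  replace (Csum (Cpow (Copp v)) (2 * q))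
    with (Cmult (Cinv (Cminus (Copp v) 1))
                (Cmult (Cminus (Copp v) 1) (Csum (Cpow (Copp v)) (2 * q))))
    by (field; exact Hv).
  rewrite G. field. repeat split; assumption.
Qed.

Lemma sum_Cinv_one_plus_cis q th (p := (2 * q + 1)%nat) :
  Cplus 1 (cis (INR p * th)) <> RtoC 0 ->
  (forall m, (m <= 2 * q)%nat -> Cplus 1 (cis (th + INR m * (2 * PI / INR p))) <> RtoC 0) ->
  Csum (fun m => Cinv (Cplus 1 (cis (th + INR m * (2 * PI / INR p))))) (2 * q) =
  Cdiv (RtoC (INR p)) (Cplus 1 (cis (INR p * th))).
Proof.
  intros H1 H2.
  rewrite (Csum_ext _ (fun m => Cmult (Cinv (Cplus 1 (cis (INR p * th))))
     (Csum (fun k => Cmult (cis (INR k * (th + PI)))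
                           (Cpow (cis (INR k * (2 * PI / INR p))) m)) (2 * q)))).
  2: { intros m Hm. unfold p. rewrite Cinv_one_plus_cis_expand by auto. unfold Cdiv. ring. }
  rewrite Csum_mult_l, Csum_swap.
  rewrite (Csum_only_first _ (2 * q)).
  - rewrite Rmult_0_l, cis_0, (Csum_ext _ (fun _ => RtoC 1)), Csum_const.
    + replace (S (2 * q)) with p by (unfold p; lia). unfold Cdiv. ring.
    + intros m _. rewrite Rmult_0_l, cis_0. induction m as [|m IHm]; simpl; [|rewrite IHm]; ring.
  - intros k Hk. rewrite Csum_mult_l.
    replace (2 * q)%nat with (pred p) by (unfold p; lia).
    rewrite sum_roots_of_unity by (unfold p; lia). ring.
Qed.

Lemma one_plus_cis_double_neq0 y : cos y <> 0 -> Cplus 1 (cis (2 * y)) <> RtoC 0.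
Proof.
  intros Hc E. apply (f_equal fst) in E. unfold cis, Cplus, RtoC in E. simpl in E.
  rewrite cos_2a_cos in E. apply Hc. nra.
Qed.

Lemma tan_cis y : cos y <> 0 ->
  ((0, tan y) : C) = Cminus 1 (Cmult 2 (Cinv (Cplus 1 (cis (2 * y))))).
Proof.
  intros Hc. assert (Hn := one_plus_cis_double_neq0 y Hc).
  assert (E : Cmult (0, tan y) (Cplus 1 (cis (2 * y))) = Cminus (cis (2 * y)) 1).
  { unfold cis, Cplus, Cmult, Cminus, Copp, RtoC. simpl.
    rewrite cos_2a_cos, sin_2a. unfold tan.
    assert (Hs := sin2_cos2 y). unfold Rsqr in Hs.
    apply injective_projections; simpl.
    - replace (sin y / cos y * (0 + 2 * sin y * cos y)) with (2 * (sin y * sin y))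
        by (field; exact Hc).
      lra.
    - field. exact Hc. }
  replace ((0, tan y) : C) with (Cmult (Cmult (0, tan y) (Cplus 1 (cis (2 * y))))
                                       (Cinv (Cplus 1 (cis (2 * y))))) by (field; exact Hn).
  rewrite E. field. exact Hn.
Qed.

Lemma Csum_imag (f : nat -> R) n : Csum (fun m => (0, f m)) n = (0, sum_f_R0 f n).
Proof.
  induction n as [|n IHn]; simpl.
  - reflexivity.
  - rewrite IHn. unfold Cplus. simpl. f_equal. ring.
Qed.

Lemma tan_sum_odd q y (p := (2 * q + 1)%nat) :
  cos (INR p * y) <> 0 -> (forall m, (m <= 2 * q)%nat -> cos (y + INR m * PI / INR p) <> 0) ->
  sum_f_R0 (fun m => tan (y + INR m * PI / INR p)) (2 * q) = INR p * tan (INR p * y).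
Proof.
  intros H1 H2.
  assert (Hp : INR p <> 0) by (apply not_0_INR; unfold p; lia).
  assert (Ang : forall m, 2 * (y + INR m * PI / INR p) = 2 * y + INR m * (2 * PI / INR p))
    by (intros; field; exact Hp).
  assert (Angp : 2 * (INR p * y) = INR p * (2 * y)) by ring.
  assert (K : ((0, sum_f_R0 (fun m => tan (y + INR m * PI / INR p)) (2 * q)) : C)
             = (0, INR p * tan (INR p * y))).
  { rewrite <- Csum_imag.
    rewrite (Csum_ext _ (fun m => Cplus 1 (Cmult (-2)
               (Cinv (Cplus 1 (cis (2 * y + INR m * (2 * PI / INR p)))))))).
    2: { intros m Hm. rewrite tan_cis, Ang by auto. unfold Cminus. ring. }
    rewrite Csum_plus, Csum_mult_l, Csum_const.
    unfold p. rewrite sum_Cinv_one_plus_cis; fold p.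
    - replace (S (2 * q)) with p by (unfold p; lia).
      replace (INR p * (2 * y)) with (2 * (INR p * y)) by ring.
      replace ((0, INR p * tan (INR p * y)) : C) with (Cmult (RtoC (INR p)) (0, tan (INR p * y)))
        by (unfold Cmult, RtoC; simpl; f_equal; ring).
      rewrite (tan_cis (INR p * y) H1). unfold Cdiv, Cminus. ring.
    - rewrite <- Angp. apply one_plus_cis_double_neq0, H1.
    - intros m Hm. rewrite <- Ang. apply one_plus_cis_double_neq0, H2, Hm. }
  apply (f_equal snd) in K. exact K.
Qed.

Lemma tan_PI2_sub_decomp x : sin x <> 0 -> cos x <> 0 ->
  tan (PI / 2 - x) = tan x + 2 * tan (PI / 2 - 2 * x).
Proof.
  intros Hs Hc. unfold tan. rewrite !sin_shift, !cos_shift, sin_2a, cos_2a.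
  field. split; assumption.
Qed.

Lemma tan_double_PI4 y : cos (PI / 4 + y) <> 0 -> cos (PI / 4 - y) <> 0 ->
  tan (2 * y) = (tan (PI / 4 + y) - tan (PI / 4 - y)) / 2.
Proof.
  intros H1 H2. unfold tan.
  rewrite sin_2a, cos_2a, sin_plus, sin_minus, cos_plus, cos_minus in *.
  rewrite sin_PI4, cos_PI4 in *. set (k := 1 / sqrt 2) in *.
  assert (Hk : k <> 0) by (intro E; apply H1; rewrite E; ring).
  assert (A : cos y - sin y <> 0) by (contradict H1; rewrite <- Rmult_minus_distr_l, H1; ring).
  assert (B : cos y + sin y <> 0) by (contradict H2; rewrite <- Rmult_plus_distr_l, H2; ring).
  replace (cos y * cos y - sin y * sin y) with ((cos y - sin y) * (cos y + sin y)) by ring.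
  field. repeat split; assumption.
Qed.

Lemma tan_double_PI2_sub x : sin x <> 0 -> cos x <> 0 -> cos (2 * x) <> 0 ->
  tan (2 * x) = (tan (PI / 2 - x) - tan x) / 2 - 2 * tan (PI / 2 - 4 * x).
Proof.
  intros Hs Hc Hc2.
  assert (Hs2 : sin (2 * x) <> 0).
  { rewrite sin_2a. repeat apply Rmult_integral_contrapositive_currified; lra || assumption. }
  rewrite (tan_PI2_sub_decomp x Hs Hc).
  replace (4 * x) with (2 * (2 * x)) by ring.
  rewrite (tan_PI2_sub_decomp (2 * x) Hs2 Hc2). lra.
Qed.

Lemma tan_add_PI x : tan (x + PI) = tan x.
Proof. unfold tan. rewrite neg_sin, neg_cos. unfold Rdiv. rewrite Rinv_opp. ring. Qed.

Lemma tan_add_INR_PI x n : tan (x + INR n * PI) = tan x.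
Proof.
  induction n as [|n IHn].
  - simpl. rewrite Rmult_0_l, Rplus_0_r. reflexivity.
  - rewrite S_INR. replace (x + (INR n + 1) * PI) with (x + INR n * PI + PI) by ring.
    rewrite tan_add_PI. exact IHn.
Qed.

Lemma tan_add_IZR_PI x t : tan (x + IZR t * PI) = tan x.
Proof.
  destruct (Z_le_gt_dec 0 t).
  - rewrite <- (Z2Nat.id t), <- INR_IZR_INZ by lia. apply tan_add_INR_PI.
  - rewrite <- (tan_add_INR_PI (x + IZR t * PI) (Z.to_nat (- t))).
    rewrite INR_IZR_INZ, Z2Nat.id, opp_IZR by lia. f_equal. ring.
Qed.

Lemma Zgcd_add_mul a k M : Z.gcd (a + k * M) M = Z.gcd a M.
Proof. rewrite Z.gcd_comm, Z.gcd_add_mult_diag_r. apply Z.gcd_comm. Qed.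

Lemma Zcoprime_mul_l x y M : Z.gcd x M = 1%Z -> Z.gcd y M = 1%Z -> Z.gcd (x * y) M = 1%Z.
Proof.
  intros Hx Hy. apply Zgcd_1_rel_prime, rel_prime_sym, rel_prime_mult;
    apply rel_prime_sym, Zgcd_1_rel_prime; assumption.
Qed.

Lemma Zcoprime_mul_r x a b : Z.gcd x a = 1%Z -> Z.gcd x b = 1%Z -> Z.gcd x (a * b) = 1%Z.
Proof. intros Ha Hb. rewrite Z.gcd_comm. apply Zcoprime_mul_l; rewrite Z.gcd_comm; assumption. Qed.

Lemma Zcoprime_of_mul_r x a b : Z.gcd x (a * b) = 1%Z -> Z.gcd x a = 1%Z.
Proof.
  intros H. apply Zgcd_1_rel_prime in H. apply Zgcd_1_rel_prime, rel_prime_sym.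
  apply (rel_prime_div (a * b)); [apply rel_prime_sym, H | apply Z.divide_factor_l].
Qed.

Lemma Zcoprime_pow x M n : Z.gcd x M = 1%Z -> Z.gcd (x ^ Z.of_nat n) M = 1%Z.
Proof.
  intros H. apply Zgcd_1_rel_prime, rel_prime_sym, Zpow_facts.rel_prime_Zpower_r; [lia|].
  apply rel_prime_sym, Zgcd_1_rel_prime, H.
Qed.

Lemma Zgcd_odd_2 a : Z.Odd a -> Z.gcd a 2 = 1%Z.
Proof. intros [t ->]. rewrite Z.add_comm, Z.mul_comm, Zgcd_add_mul. reflexivity. Qed.

Lemma Zodd_of_gcd_2 a : Z.gcd a 2 = 1%Z -> Z.Odd a.
Proof.
  intros H. destruct (Z.Even_or_Odd a) as [[m ->]|Ho]; [|exact Ho].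
  rewrite Z.gcd_comm, Z.gcd_mul_diag_l in H; lia.
Qed.

Lemma prime_odd p : prime p -> p <> 2%Z -> Z.Odd p.
Proof.
  intros Hp H2. apply Zodd_of_gcd_2. rewrite Z.gcd_comm.
  apply Zgcd_1_rel_prime, rel_prime_le_prime; [exact Hp|].
  assert (Hp2 := prime_ge_2 p Hp). lia.
Qed.

Lemma exists_prime_divisor n : (1 < n)%Z -> exists p, prime p /\ (p | n)%Z.
Proof.
  intros Hn. induction n as [n IH] using (well_founded_induction (Z.lt_wf 0)).
  destruct (prime_dec n) as [P|P]; [exists n; split; [exact P | apply Z.divide_refl]|].
  destruct (not_prime_divide n Hn P) as [r [Hr Hd]].
  destruct (IH r ltac:(lia) ltac:(lia)) as [p [Pp Hpr]].
  exists p. split; [exact Pp | eapply Z.divide_trans; eassumption].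
Qed.

(* Pigeonhole on the residues of u^0, ..., u^M modulo M. *)
Lemma exists_pow_congr_1 (M : nat) (u : Z) : (1 <= M)%nat -> Z.gcd u (Z.of_nat M) = 1%Z ->
  exists n : nat, (1 <= n)%nat /\ (Z.of_nat M | u ^ Z.of_nat n - 1)%Z.
Proof.
  intros HM Hu. apply NNPP. intros Hno.
  set (g := fun k : nat => Z.to_nat ((u ^ Z.of_nat k) mod Z.of_nat M)).
  assert (Hg : forall x y : nat, (x < y)%nat -> g x <> g y).
  { intros x y Hxy E. apply Hno. exists (y - x)%nat. split; [lia|].
    unfold g in E. apply Z2Nat.inj in E; try (apply Z.mod_pos_bound; lia).
    apply (Z.gauss _ (u ^ Z.of_nat x)).
    - replace (u ^ Z.of_nat x * (u ^ Z.of_nat (y - x) - 1))%Z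
        with (u ^ Z.of_nat y - u ^ Z.of_nat x)%Z
        by (rewrite Z.mul_sub_distr_l, <- Z.pow_add_r by lia; f_equal; [f_equal|]; lia).
      apply Z.mod_divide; [lia|]. rewrite Zminus_mod, E, Z.sub_diag. reflexivity.
    - rewrite Z.gcd_comm. apply Zcoprime_pow, Hu. }
  assert (ND : NoDup (map g (seq 0 (S M)))).
  { apply NoDup_map_NoDup_ForallPairs; [|apply seq_NoDup].
    intros x y _ _ E. destruct (Nat.lt_trichotomy x y) as [H|[H|H]];
      [exfalso; exact (Hg x y H E) | exact H | exfalso; exact (Hg y x H (eq_sym E))]. }
  assert (Inc : incl (map g (seq 0 (S M))) (seq 0 M)).
  { intros z Hz. apply in_map_iff in Hz. destruct Hz as [k [<- _]].
    apply in_seq. unfold g.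
    assert (B := Z.mod_pos_bound (u ^ Z.of_nat k) (Z.of_nat M) ltac:(lia)). lia. }
  apply NoDup_incl_length in Inc; [|exact ND].
  rewrite length_map, !length_seq in Inc. lia.
Qed.

Lemma Zpow_neq_1 r n : (2 <= Z.abs r)%Z -> (1 <= n)%nat -> (r ^ Z.of_nat n <> 1)%Z.
Proof.
  intros Hr Hn E. apply (f_equal Z.abs) in E. rewrite Z.abs_pow in E.
  assert (Z.abs r ^ 1 <= Z.abs r ^ Z.of_nat n)%Z by (apply Z.pow_le_mono_r; lia).
  lia.
Qed.

Lemma Z_of_nat_gcd a b : Z.of_nat (Nat.gcd a b) = Z.gcd (Z.of_nat a) (Z.of_nat b).
Proof.
  assert (Nat_divide_Z : forall x y, Nat.divide x y -> (Z.of_nat x | Z.of_nat y)%Z).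
  { intros x y [c ->]. exists (Z.of_nat c). lia. }
  assert (Z_divide_nat : forall x y, (Z.of_nat x | Z.of_nat y)%Z -> Nat.divide x y).
  { intros [|x] y [c H]; [exists O; lia|].
    exists (Z.to_nat c). nia. }
  symmetry. apply Z.gcd_unique; [lia | apply Nat_divide_Z, Nat.gcd_divide_l
                                     | apply Nat_divide_Z, Nat.gcd_divide_r|].
  intros d H1 H2. apply Z.divide_abs_l in H1, H2. apply Z.divide_abs_l.
  replace (Z.abs d) with (Z.of_nat (Z.abs_nat d)) in * by lia.
  apply Nat_divide_Z, Nat.gcd_greatest; apply Z_divide_nat; assumption.
Qed.

Lemma Zcoprime_double M b :
  Z.gcd b (Z.of_nat M) = 1%Z -> Z.Odd b -> Z.gcd b (Z.of_nat (M * 2)) = 1%Z.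
Proof.
  intros HbM Hb. rewrite Nat2Z.inj_mul. apply Zcoprime_mul_r; [exact HbM | apply Zgcd_odd_2, Hb].
Qed.

Definition tan_frac (M : nat) (a : Z) : R := tan (IZR a * PI / INR M).

Lemma star_point_tan_frac N k : star_point N k = tan_frac N (Z.of_nat k).
Proof. unfold star_point, tan_frac. rewrite <- INR_IZR_INZ. reflexivity. Qed.

Lemma tan_frac_add_mul M a t : M <> O -> tan_frac M (a + t * Z.of_nat M) = tan_frac M a.
Proof.
  intros HM. unfold tan_frac. rewrite <- (tan_add_IZR_PI (IZR a * PI / INR M) t).
  rewrite plus_IZR, mult_IZR, <- INR_IZR_INZ. f_equal. field. apply not_0_INR, HM.
Qed.

Lemma tan_frac_mul M d a : M <> O -> d <> O -> tan_frac (M * d) (a * Z.of_nat d) = tan_frac M a.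
Proof.
  intros HM Hd. unfold tan_frac. f_equal. rewrite mult_IZR, mult_INR, <- INR_IZR_INZ.
  field. split; apply not_0_INR; assumption.
Qed.

Lemma tan_frac_opp M a : tan_frac M (- a) = - tan_frac M a.
Proof. unfold tan_frac. rewrite opp_IZR, <- tan_neg. f_equal. unfold Rdiv. ring. Qed.

Lemma cos_frac_neq0 M a : (3 <= M)%nat -> Z.gcd a (Z.of_nat M) = 1%Z ->
  cos (IZR a * PI / INR M) <> 0.
Proof.
  intros HM Ha Hc. destruct (cos_eq_0_0 _ Hc) as [k Hk].
  assert (HMr : INR M <> 0) by (apply not_0_INR; lia).
  assert (E : (2 * a = Z.of_nat M * (2 * k + 1))%Z).
  { apply eq_IZR. rewrite !mult_IZR, plus_IZR, <- INR_IZR_INZ.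
    apply Rmult_eq_reg_r with (PI / (2 * INR M)).
    - transitivity (IZR a * PI / INR M); [field; exact HMr|].
      rewrite Hk, mult_IZR. field. exact HMr.
    - apply Rmult_integral_contrapositive; split; [apply PI_neq0|]. apply Rinv_neq_0_compat. lra. }
  assert (D : (Z.of_nat M | a * 2)%Z) by (exists (2 * k + 1)%Z; lia).
  apply Z.gauss in D; [|rewrite Z.gcd_comm; exact Ha].
  apply Z.divide_pos_le in D; lia.
Qed.

Lemma tan_frac_sum_odd M q a (p := (2 * q + 1)%nat) : M <> O ->
  cos (IZR a * PI / INR M) <> 0 ->
  (forall m, (m <= 2 * q)%nat -> cos (IZR (a + Z.of_nat m * Z.of_nat M) * PI / INR (M * p)) <> 0) ->
  sum_f_R0 (fun m => tan_frac (M * p) (a + Z.of_nat m * Z.of_nat M)) (2 * q) = INR p * tan_frac M a.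
Proof.
  intros HM H1 H2.
  assert (HMr : INR M <> 0) by (apply not_0_INR; exact HM).
  assert (Hpr : INR p <> 0) by (apply not_0_INR; unfold p; lia).
  set (y := IZR a * PI / INR (M * p)).
  assert (A1 : forall m, IZR (a + Z.of_nat m * Z.of_nat M) * PI / INR (M * p)
                         = y + INR m * PI / INR p).
  { intros m. unfold y. rewrite plus_IZR, mult_IZR, <- !INR_IZR_INZ, mult_INR.
    field. split; assumption. }
  assert (A2 : INR p * y = IZR a * PI / INR M).
  { unfold y. rewrite mult_INR. field. split; assumption. }
  unfold tan_frac.
  rewrite (sum_eq _ (fun m => tan (y + INR m * PI / INR p))) by (intros; rewrite A1; reflexivity).
  unfold p. rewrite tan_sum_odd; fold p.
  - rewrite A2. reflexivity.
  - rewrite A2. exact H1.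
  - intros m Hm. rewrite <- A1. apply H2, Hm.
Qed.

(** * Rational subspaces of R *)

Definition Qsubspace (V : R -> Prop) : Prop :=
  V 0 /\ (forall x y, V x -> V y -> V (x + y)) /\ (forall (c : Q) x, V x -> V (Q2R c * x)).

Section Qsubspace_closure.

Variable V : R -> Prop.
Hypothesis HV : Qsubspace V.

Lemma Qsubspace_add x y : V x -> V y -> V (x + y).
Proof. apply HV. Qed.

Lemma Qsubspace_mul_IZR z x : V x -> V (IZR z * x).
Proof.
  intros Hx. replace (IZR z) with (Q2R (inject_Z z)); [apply HV, Hx|].
  unfold Q2R, inject_Z. simpl. field.
Qed.

Lemma Qsubspace_div_IZR z x : z <> 0%Z -> V x -> V (x / IZR z).
Proof.
  intros Hz Hx. replace (x / IZR z) with (Q2R (Qinv (inject_Z z)) * x); [apply HV, Hx|].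
  rewrite Q2R_inv.
  - unfold Q2R, inject_Z. simpl. field. apply not_0_IZR, Hz.
  - intro E. apply Hz. unfold Qeq, inject_Z in E. simpl in E. lia.
Qed.

Lemma Qsubspace_opp x : V x -> V (- x).
Proof.
  intros Hx. replace (- x) with (IZR (-1) * x) by (simpl; ring). apply Qsubspace_mul_IZR, Hx.
Qed.

Lemma Qsubspace_sub x y : V x -> V y -> V (x - y).
Proof. intros Hx Hy. apply Qsubspace_add; [exact Hx | apply Qsubspace_opp, Hy]. Qed.

Lemma Qsubspace_sum f n : (forall m, (m <= n)%nat -> V (f m)) -> V (sum_f_R0 f n).
Proof.
  induction n as [|n IHn]; intros Hf; simpl.
  - apply Hf. lia.
  - apply Qsubspace_add; [apply IHn; intros; apply Hf | apply Hf]; lia.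
Qed.

(* Telescoping along a, u a, u^2 a, ..., u^n a = a (mod M) puts (1 - r^n) f a in V. *)
Lemma Qsubspace_orbit_descent (M : nat) (f : Z -> R) (u r : Z) :
  (1 <= M)%nat -> (2 <= Z.abs r)%Z -> Z.gcd u (Z.of_nat M) = 1%Z ->
  (forall a t, f (a + t * Z.of_nat M)%Z = f a) ->
  (forall a, Z.gcd a (Z.of_nat M) = 1%Z -> V (f a - IZR r * f (u * a)%Z)) ->
  forall a, Z.gcd a (Z.of_nat M) = 1%Z -> V (f a).
Proof.
  intros HM Hr Hu Hper Hrel.
  assert (Hk : forall k a, Z.gcd a (Z.of_nat M) = 1%Z ->
     V (f a - IZR (r ^ Z.of_nat k) * f (u ^ Z.of_nat k * a)%Z)).
  { induction k as [|k IHk]; intros a Ha.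
    - change (u ^ Z.of_nat 0)%Z with 1%Z. rewrite Z.mul_1_l.
      replace (f a - IZR (r ^ Z.of_nat 0) * f a) with 0 by (simpl; ring). apply HV.
    - replace (f a - IZR (r ^ Z.of_nat (S k)) * f (u ^ Z.of_nat (S k) * a)%Z)
        with ((f a - IZR (r ^ Z.of_nat k) * f (u ^ Z.of_nat k * a)%Z)
              + IZR (r ^ Z.of_nat k)
                * (f (u ^ Z.of_nat k * a)%Z - IZR r * f (u * (u ^ Z.of_nat k * a))%Z))
        by (rewrite Nat2Z.inj_succ, !Z.pow_succ_r, mult_IZR, Z.mul_assoc by lia; ring).
      apply Qsubspace_add; [apply IHk, Ha |].
      apply Qsubspace_mul_IZR, Hrel, Zcoprime_mul_l; [apply Zcoprime_pow, Hu | exact Ha]. }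
  intros a Ha.
  destruct (exists_pow_congr_1 M u HM Hu) as [n [Hn [t Ht]]].
  specialize (Hk n a Ha).
  replace (u ^ Z.of_nat n * a)%Z with (a + (t * a) * Z.of_nat M)%Z in Hk
    by (replace (u ^ Z.of_nat n)%Z with (t * Z.of_nat M + 1)%Z by lia; ring).
  rewrite Hper in Hk.
  replace (f a) with ((f a - IZR (r ^ Z.of_nat n) * f a) / IZR (1 - r ^ Z.of_nat n)).
  - apply Qsubspace_div_IZR; [| exact Hk]. pose proof (Zpow_neq_1 r n Hr Hn). lia.
  - rewrite minus_IZR. field. intros E. apply (Zpow_neq_1 r n Hr Hn), eq_IZR. lra.
Qed.

End Qsubspace_closure.

Definition contains_primitive_tan (V : R -> Prop) (M : nat) : Prop :=
  forall a, Z.gcd a (Z.of_nat M) = 1%Z -> V (tan_frac M a).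

Definition primitive_span (N : nat) (x : R) : Prop := exists c : nat -> Q,
  x = sum_f_R0 (fun j => if primitive_idx N j then Q2R (c j) * star_point N j else 0) N.

Lemma primitive_span_Qsubspace N : Qsubspace (primitive_span N).
Proof.
  split; [|split].
  - exists (fun _ => 0%Q). symmetry. apply sum_eq_R0. intros j _.
    destruct (primitive_idx N j); [unfold Q2R; simpl|]; ring.
  - intros x y [c1 ->] [c2 ->]. exists (fun j => (c1 j + c2 j)%Q). rewrite <- plus_sum.
    apply sum_eq. intros j _. destruct (primitive_idx N j); [rewrite Q2R_plus|]; ring.
  - intros c x [d ->]. exists (fun j => (c * d j)%Q). rewrite scal_sum.
    apply sum_eq. intros j _. destruct (primitive_idx N j); [rewrite Q2R_mult|]; ring.
Qed.

Lemma sum_f_R0_single f k n : (k <= n)%nat -> (forall i, i <> k -> f i = 0) -> sum_f_R0 f n = f k.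
Proof.
  intros Hk Hf. induction n as [|n IHn]; simpl.
  - f_equal. lia.
  - destruct (Nat.eq_dec k (S n)) as [->|Hne].
    + rewrite sum_eq_R0; [ring|]. intros i Hi. apply Hf. lia.
    + rewrite IHn, (Hf (S n)) by lia. ring.
Qed.

Lemma primitive_span_star_point N k : primitive_idx N k = true -> primitive_span N (star_point N k).
Proof.
  intros Hk. exists (fun j => if Nat.eqb j k then 1%Q else 0%Q).
  assert (HkN : (k <= N)%nat).
  { apply andb_prop in Hk as [Hk _]. apply andb_prop in Hk as [_ Hk].
    apply Nat.ltb_lt in Hk. lia. }
  rewrite (sum_f_R0_single _ k _ HkN).
  - rewrite Hk, Nat.eqb_refl. unfold Q2R. simpl. field.
  - intros i Hi. apply Nat.eqb_neq in Hi. rewrite Hi.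
    destruct (primitive_idx N i); [unfold Q2R; simpl|]; ring.
Qed.

Lemma primitive_idx_of_Z N r : (0 < r)%Z -> (2 * r < Z.of_nat N)%Z -> Z.gcd r (Z.of_nat N) = 1%Z ->
  primitive_idx N (Z.to_nat r) = true.
Proof.
  intros H1 H2 H3. unfold primitive_idx.
  replace (Nat.gcd (Z.to_nat r) N) with 1%nat
    by (apply Nat2Z.inj; rewrite Z_of_nat_gcd, Z2Nat.id by lia; symmetry; exact H3).
  rewrite Nat.eqb_refl, andb_true_r.
  apply andb_true_intro; split; [apply Nat.leb_le | apply Nat.ltb_lt]; lia.
Qed.

Lemma primitive_span_contains_primitive_tan N : (3 <= N)%nat ->
  contains_primitive_tan (primitive_span N) N.
Proof.
  intros HN a Ha.
  set (r := (a mod Z.of_nat N)%Z).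
  assert (Hr : (0 <= r < Z.of_nat N)%Z) by (apply Z.mod_pos_bound; lia).
  replace (tan_frac N a) with (tan_frac N r).
  2: { rewrite (Z.div_mod a (Z.of_nat N)) at 1 by lia. fold r.
       rewrite Z.add_comm, Z.mul_comm. symmetry. apply tan_frac_add_mul. lia. }
  assert (Hgr : Z.gcd r (Z.of_nat N) = 1%Z)
    by (unfold r; rewrite Z.gcd_mod, Z.gcd_comm by lia; exact Ha).
  assert (Hr0 : r <> 0%Z) by (intros E; rewrite E, Z.gcd_0_l in Hgr; lia).
  assert (Hr2 : (2 * r <> Z.of_nat N)%Z)
    by (intros E; rewrite <- E, Z.mul_comm, Z.gcd_mul_diag_l in Hgr; lia).
  destruct (Z_lt_ge_dec (2 * r) (Z.of_nat N)).
  - pose proof (primitive_span_star_point N _ (primitive_idx_of_Z N r ltac:(lia) l Hgr)) as G.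
    rewrite star_point_tan_frac, Z2Nat.id in G by lia. exact G.
  - set (s := (Z.of_nat N - r)%Z).
    assert (Hgs : Z.gcd s (Z.of_nat N) = 1%Z).
    { unfold s. replace (Z.of_nat N - r)%Z with (- r + 1 * Z.of_nat N)%Z by ring.
      rewrite Zgcd_add_mul, Z.gcd_opp_l. exact Hgr. }
    pose proof (primitive_span_star_point N _
                  (primitive_idx_of_Z N s ltac:(lia) ltac:(lia) Hgs)) as G.
    rewrite star_point_tan_frac, Z2Nat.id in G by lia.
    replace r with (- s + 1 * Z.of_nat N)%Z by (unfold s; ring).
    rewrite tan_frac_add_mul, tan_frac_opp by lia.
    apply (Qsubspace_opp _ (primitive_span_Qsubspace N)), G.
Qed.

(** * Descent from M p to M *)

Section descent.

Variable V : R -> Prop.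
Hypothesis HV : Qsubspace V.

Lemma descent_two_odd M : (3 <= M)%nat -> Z.Odd (Z.of_nat M) ->
  contains_primitive_tan V (M * 2) -> contains_primitive_tan V M.
Proof.
  intros HM [L HL] H c Hc.
  assert (G2 : Z.gcd 2 (Z.of_nat M) = 1%Z)
    by (rewrite Z.gcd_comm; apply Zgcd_odd_2; exists L; exact HL).
  assert (C1 : Z.gcd (Z.of_nat M - 2 * c) (Z.of_nat (M * 2)) = 1%Z).
  { apply Zcoprime_double; [|exists (L - c)%Z; lia].
    replace (Z.of_nat M - 2 * c)%Z with (- (2 * c) + 1 * Z.of_nat M)%Z by ring.
    rewrite Zgcd_add_mul, Z.gcd_opp_l. apply Zcoprime_mul_l; assumption. }
  assert (C2 : Z.gcd (4 * c - Z.of_nat M) (Z.of_nat (M * 2)) = 1%Z).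
  { apply Zcoprime_double; [|exists (2 * c - L - 1)%Z; lia].
    replace (4 * c - Z.of_nat M)%Z with (2 * (2 * c) + (-1) * Z.of_nat M)%Z by ring.
    rewrite Zgcd_add_mul. repeat apply Zcoprime_mul_l; assumption. }
  assert (HMr : INR M <> 0) by (apply not_0_INR; lia).
  set (x := IZR (Z.of_nat M - 2 * c) * PI / INR (M * 2)).
  assert (A1 : IZR c * PI / INR M = PI / 2 - x).
  { unfold x. rewrite minus_IZR, mult_IZR, <- INR_IZR_INZ, mult_INR. simpl INR. field. exact HMr. }
  assert (A2 : IZR (4 * c - Z.of_nat M) * PI / INR (M * 2) = PI / 2 - 2 * x).
  { unfold x. rewrite !minus_IZR, !mult_IZR, <- INR_IZR_INZ, mult_INR. simpl INR.
    field. exact HMr. }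
  assert (Hcx : cos x <> 0) by (apply cos_frac_neq0; [lia | exact C1]).
  assert (Hsx : sin x <> 0) by (rewrite <- cos_shift, <- A1; apply cos_frac_neq0; assumption).
  replace (tan_frac M c)
    with (tan_frac (M * 2) (Z.of_nat M - 2 * c) + IZR 2 * tan_frac (M * 2) (4 * c - Z.of_nat M)).
  - apply Qsubspace_add; [exact HV | apply H, C1 |].
    apply Qsubspace_mul_IZR; [exact HV | apply H, C2].
  - unfold tan_frac. rewrite A1, A2. fold x. symmetry. apply tan_PI2_sub_decomp; assumption.
Qed.

Lemma descent_two_mod4_0 M K : (3 <= M)%nat -> Z.of_nat M = (4 * K)%Z ->
  contains_primitive_tan V (M * 2) -> contains_primitive_tan V M.
Proof.
  intros HM HK H a Ha.
  set (L := (2 * K)%Z).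
  rewrite HK in Ha.
  assert (HaL : Z.gcd a L = 1%Z)
    by (apply (Zcoprime_of_mul_r _ _ 2); replace (L * 2)%Z with (4 * K)%Z by (unfold L; ring);
        exact Ha).
  assert (Hao : Z.Odd a)
    by (apply Zodd_of_gcd_2, (Zcoprime_of_mul_r _ _ (2 * K));
        replace (2 * (2 * K))%Z with (4 * K)%Z by ring; exact Ha).
  destruct Hao as [t Ht].
  assert (Hcop : forall b, Z.gcd b L = 1%Z -> Z.Odd b -> Z.gcd b (Z.of_nat (M * 2)) = 1%Z).
  { intros b HbL Hb. replace (Z.of_nat (M * 2)) with (L * 2 * 2)%Z by (unfold L; lia).
    apply Zgcd_odd_2 in Hb. apply Zcoprime_mul_r; [apply Zcoprime_mul_r|]; assumption. }
  assert (C1 : Z.gcd (L + a) (Z.of_nat (M * 2)) = 1%Z).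
  { apply Hcop; [|exists (K + t)%Z; unfold L; lia].
    replace (L + a)%Z with (a + 1 * L)%Z by ring. rewrite Zgcd_add_mul. exact HaL. }
  assert (C2 : Z.gcd (L - a) (Z.of_nat (M * 2)) = 1%Z).
  { apply Hcop; [|exists (K - t - 1)%Z; unfold L; lia].
    replace (L - a)%Z with (- a + 1 * L)%Z by ring. rewrite Zgcd_add_mul, Z.gcd_opp_l. exact HaL. }
  assert (HMr : INR M = 4 * IZR K) by (rewrite INR_IZR_INZ, HK, mult_IZR; reflexivity).
  assert (HK0 : IZR K <> 0) by (intros E; rewrite E in HMr; apply (not_0_INR M); [lia | lra]).
  set (y := IZR a * PI / INR (M * 2)).
  assert (A1 : IZR (L + a) * PI / INR (M * 2) = PI / 4 + y).
  { unfold y, L. rewrite plus_IZR, mult_IZR, mult_INR, HMr. simpl INR. field. exact HK0. }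
  assert (A2 : IZR (L - a) * PI / INR (M * 2) = PI / 4 - y).
  { unfold y, L. rewrite minus_IZR, mult_IZR, mult_INR, HMr. simpl INR. field. exact HK0. }
  assert (A3 : IZR a * PI / INR M = 2 * y).
  { unfold y. rewrite mult_INR, HMr. simpl INR. field. exact HK0. }
  replace (tan_frac M a) with ((tan_frac (M * 2) (L + a) - tan_frac (M * 2) (L - a)) / IZR 2).
  - apply Qsubspace_div_IZR; [exact HV | lia |].
    apply Qsubspace_sub; [exact HV | apply H, C1 | apply H, C2].
  - unfold tan_frac. rewrite A1, A2, A3. symmetry. apply tan_double_PI4.
    + rewrite <- A1. apply cos_frac_neq0; [lia | exact C1].
    + rewrite <- A2. apply cos_frac_neq0; [lia | exact C2].
Qed.

(* For odd a, (L - 2) a = L - 2 a (mod M = 2 L), so this is the third tangent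
   identity at x = a pi / (2 M). *)
Lemma descent_two_mod4_2_relation M L : (3 <= M)%nat -> Z.of_nat M = (L * 2)%Z -> Z.Odd L ->
  contains_primitive_tan V (M * 2) ->
  forall a, Z.gcd a (Z.of_nat M) = 1%Z -> V (tan_frac M a - IZR (-2) * tan_frac M ((L - 2) * a)).
Proof.
  intros HM HML HL H a Ha.
  assert (HMr : INR M <> 0) by (apply not_0_INR; lia).
  assert (Hao : Z.Odd a)
    by (apply Zodd_of_gcd_2, (Zcoprime_of_mul_r _ _ L); rewrite Z.mul_comm, <- HML; exact Ha).
  destruct Hao as [s Hs].
  assert (Ga : Z.gcd a (Z.of_nat (M * 2)) = 1%Z)
    by (apply Zcoprime_double; [exact Ha | exists s; exact Hs]).
  assert (Gb : Z.gcd (Z.of_nat M - a) (Z.of_nat (M * 2)) = 1%Z).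
  { apply Zcoprime_double; [|exists (L - s - 1)%Z; lia].
    replace (Z.of_nat M - a)%Z with (- a + 1 * Z.of_nat M)%Z by ring.
    rewrite Zgcd_add_mul, Z.gcd_opp_l. exact Ha. }
  set (x := IZR a * PI / INR (M * 2)).
  assert (A1 : IZR (Z.of_nat M - a) * PI / INR (M * 2) = PI / 2 - x).
  { unfold x. rewrite minus_IZR, <- INR_IZR_INZ, mult_INR. simpl INR. field. exact HMr. }
  assert (A2 : IZR a * PI / INR M = 2 * x).
  { unfold x. rewrite mult_INR. simpl INR. field. exact HMr. }
  assert (A3 : IZR (L - 2 * a) * PI / INR M = PI / 2 - 4 * x).
  { rewrite INR_IZR_INZ, HML, mult_IZR in HMr.
    unfold x. rewrite mult_INR, INR_IZR_INZ, HML, minus_IZR, !mult_IZR. simpl INR.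
    field. intros E. apply HMr. rewrite E. ring. }
  assert (Hcx : cos x <> 0) by (apply cos_frac_neq0; [lia | exact Ga]).
  assert (Hsx : sin x <> 0) by (rewrite <- cos_shift, <- A1; apply cos_frac_neq0; [lia | exact Gb]).
  assert (Hc2 : cos (2 * x) <> 0) by (rewrite <- A2; apply cos_frac_neq0; assumption).
  replace (tan_frac M a - IZR (-2) * tan_frac M ((L - 2) * a))
    with ((tan_frac (M * 2) (Z.of_nat M - a) - tan_frac (M * 2) a) / IZR 2).
  - apply Qsubspace_div_IZR; [exact HV | lia |].
    apply Qsubspace_sub; [exact HV | apply H, Gb | apply H, Ga].
  - replace ((L - 2) * a)%Z with (L - 2 * a + s * Z.of_nat M)%Z by (rewrite HML, Hs; ring).
    rewrite tan_frac_add_mul by lia.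
    unfold tan_frac. rewrite A1, A2, A3. fold x. rewrite (tan_double_PI2_sub x) by assumption.
    simpl. ring.
Qed.

Lemma descent_two_mod4_2 M K : (3 <= M)%nat -> Z.of_nat M = (4 * K + 2)%Z ->
  contains_primitive_tan V (M * 2) -> contains_primitive_tan V M.
Proof.
  intros HM HK H.
  assert (HML : Z.of_nat M = ((2 * K + 1) * 2)%Z) by lia.
  unfold contains_primitive_tan.
  apply (Qsubspace_orbit_descent V HV M (tan_frac M) (2 * K + 1 - 2) (-2)); [lia | lia | | |].
  - rewrite HML. apply Zcoprime_mul_r; [|apply Zgcd_odd_2; exists (K - 1)%Z; ring].
    replace (2 * K + 1 - 2)%Z with (- (2) + 1 * (2 * K + 1))%Z by ring.
    rewrite Zgcd_add_mul, Z.gcd_opp_l, Z.gcd_comm. apply Zgcd_odd_2. exists K. reflexivity.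
  - intros a t. apply tan_frac_add_mul. lia.
  - apply (descent_two_mod4_2_relation M); [exact HM | exact HML | exists K; reflexivity | exact H].
Qed.

Lemma descent_odd_dvd M q (p := (2 * q + 1)%nat) : (3 <= M)%nat -> (Z.of_nat p | Z.of_nat M)%Z ->
  contains_primitive_tan V (M * p) -> contains_primitive_tan V M.
Proof.
  intros HM [w Hw] H a Ha.
  assert (Cm : forall m : nat, Z.gcd (a + Z.of_nat m * Z.of_nat M) (Z.of_nat (M * p)) = 1%Z).
  { intros m. rewrite Nat2Z.inj_mul. apply Zcoprime_mul_r.
    - rewrite Zgcd_add_mul. exact Ha.
    - rewrite Hw in Ha |- *. rewrite Z.mul_assoc, Zgcd_add_mul.
      apply (Zcoprime_of_mul_r _ _ w). rewrite Z.mul_comm. exact Ha. }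
  replace (tan_frac M a)
    with (sum_f_R0 (fun m => tan_frac (M * p) (a + Z.of_nat m * Z.of_nat M)) (2 * q)
          / IZR (Z.of_nat p)).
  - apply Qsubspace_div_IZR; [exact HV | unfold p; lia |].
    apply Qsubspace_sum; [exact HV|]. intros m _. apply H, Cm.
  - unfold p. rewrite tan_frac_sum_odd; fold p.
    + rewrite <- INR_IZR_INZ. field. apply not_0_INR. unfold p. lia.
    + lia.
    + apply cos_frac_neq0; assumption.
    + intros m _. apply cos_frac_neq0; [unfold p; lia | apply Cm].
Qed.

(* In the tangent sum at y = b pi / M the m = 0 term is t_M(b) itself and all
   other terms are primitive for M p. *)
Lemma descent_odd_prime_relation M q (p := (2 * q + 1)%nat) : (3 <= M)%nat ->
  prime (Z.of_nat p) -> Z.gcd (Z.of_nat p) (Z.of_nat M) = 1%Z ->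
  contains_primitive_tan V (M * p) ->
  forall b, Z.gcd b (Z.of_nat M) = 1%Z ->
  V (tan_frac M b - IZR (Z.of_nat p) * tan_frac M (Z.of_nat p * b)).
Proof.
  intros HM Hpr HpM H b Hb.
  assert (Hq : (1 <= q)%nat) by (destruct q; [exfalso; apply not_prime_1, Hpr | lia]).
  assert (Hpr' : INR p <> 0) by (apply not_0_INR; unfold p; lia).
  assert (Gpb : Z.gcd (Z.of_nat p * b) (Z.of_nat M) = 1%Z) by (apply Zcoprime_mul_l; assumption).
  assert (Cm : forall m : nat, (1 <= m <= 2 * q)%nat ->
     Z.gcd (Z.of_nat p * b + Z.of_nat m * Z.of_nat M) (Z.of_nat (M * p)) = 1%Z).
  { intros m Hm. rewrite Nat2Z.inj_mul. apply Zcoprime_mul_r; [rewrite Zgcd_add_mul; exact Gpb|].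
    replace (Z.of_nat p * b + Z.of_nat m * Z.of_nat M)%Z
      with (Z.of_nat m * Z.of_nat M + b * Z.of_nat p)%Z by ring.
    rewrite Zgcd_add_mul. apply Zcoprime_mul_l; [|rewrite Z.gcd_comm; exact HpM].
    apply Zgcd_1_rel_prime, rel_prime_le_prime; [exact Hpr | unfold p; lia]. }
  assert (T0 : tan_frac (M * p) (Z.of_nat p * b + Z.of_nat 0 * Z.of_nat M) = tan_frac M b).
  { rewrite Z.mul_0_l, Z.add_0_r, Z.mul_comm. apply tan_frac_mul; [lia | unfold p; lia]. }
  assert (E : sum_f_R0 (fun m => tan_frac (M * p) (Z.of_nat p * b + Z.of_nat m * Z.of_nat M))
                       (2 * q)
              = INR p * tan_frac M (Z.of_nat p * b)).
  { unfold p. apply tan_frac_sum_odd; fold p; [lia | apply cos_frac_neq0; assumption |].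
    intros [|m] Hm.
    - rewrite Z.mul_0_l, Z.add_0_r, mult_IZR, mult_INR, <- INR_IZR_INZ.
      replace (INR p * IZR b * PI / (INR M * INR p)) with (IZR b * PI / INR M)
        by (field; split; [exact Hpr' | apply not_0_INR; lia]).
      apply cos_frac_neq0; assumption.
    - apply cos_frac_neq0; [unfold p; lia | apply Cm; lia]. }
  rewrite decomp_sum, T0 in E by lia.
  replace (tan_frac M b - IZR (Z.of_nat p) * tan_frac M (Z.of_nat p * b))
    with (- sum_f_R0 (fun i => tan_frac (M * p) (Z.of_nat p * b + Z.of_nat (S i) * Z.of_nat M))
                     (pred (2 * q)))
    by (rewrite <- INR_IZR_INZ; lra).
  apply Qsubspace_opp; [exact HV|]. apply Qsubspace_sum; [exact HV|].
  intros m Hm. apply H, Cm. lia.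
Qed.

Lemma descent_odd_prime M q (p := (2 * q + 1)%nat) : (3 <= M)%nat ->
  prime (Z.of_nat p) -> ~ (Z.of_nat p | Z.of_nat M)%Z ->
  contains_primitive_tan V (M * p) -> contains_primitive_tan V M.
Proof.
  intros HM Hpr Hnd H.
  assert (HpM : Z.gcd (Z.of_nat p) (Z.of_nat M) = 1%Z)
    by (apply Zgcd_1_rel_prime, prime_rel_prime; assumption).
  assert (Hp2 := prime_ge_2 _ Hpr).
  unfold contains_primitive_tan.
  apply (Qsubspace_orbit_descent V HV M (tan_frac M) (Z.of_nat p) (Z.of_nat p));
    [lia | lia | exact HpM | |].
  - intros a t. apply tan_frac_add_mul. lia.
  - apply descent_odd_prime_relation; assumption.
Qed.

Lemma descent_prime M p : (3 <= M)%nat -> prime (Z.of_nat p) ->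
  contains_primitive_tan V (M * p) -> contains_primitive_tan V M.
Proof.
  intros HM Hp.
  destruct (Nat.eq_dec p 2) as [->|Hp2].
  - destruct (Z.Even_or_Odd (Z.of_nat M)) as [[L HL]|Ho]; [|apply descent_two_odd; assumption].
    destruct (Z.Even_or_Odd L) as [[K ->]|[K ->]].
    + apply (descent_two_mod4_0 M K HM). lia.
    + apply (descent_two_mod4_2 M K HM). lia.
  - destruct (prime_odd _ Hp ltac:(lia)) as [q Hq].
    replace p with (2 * Z.to_nat q + 1)%nat by lia.
    destruct (Zdivide_dec (Z.of_nat (2 * Z.to_nat q + 1)) (Z.of_nat M)) as [Hd|Hnd].
    + apply descent_odd_dvd; assumption.
    + apply descent_odd_prime; [exact HM | | exact Hnd].
      replace (Z.of_nat (2 * Z.to_nat q + 1)) with (Z.of_nat p) by lia. exact Hp.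
Qed.

Lemma descent_mul M d : (3 <= M)%nat -> (1 <= d)%nat ->
  contains_primitive_tan V (M * d) -> contains_primitive_tan V M.
Proof.
  induction d as [d IH] using lt_wf_ind. intros HM Hd H.
  destruct (Nat.eq_dec d 1) as [->|Hd1]; [rewrite Nat.mul_1_r in H; exact H|].
  destruct (exists_prime_divisor (Z.of_nat d) ltac:(lia)) as [p [Hp [e He]]].
  assert (Hp1 := prime_ge_2 p Hp).
  assert (Hde : d = (Z.to_nat e * Z.to_nat p)%nat) by nia.
  apply (IH (Z.to_nat e)); [nia | exact HM | nia |].
  apply (descent_prime _ (Z.to_nat p)); [nia | rewrite Z2Nat.id by lia; exact Hp |].
  rewrite <- Nat.mul_assoc, <- Hde. exact H.
Qed.

End descent.

Theorem lemma9 (N k : nat) :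
  (3 <= N)%nat -> (1 <= k)%nat -> (2 * k < N)%nat -> (1 < Nat.gcd k N)%nat ->
  exists c : nat -> Q,
    star_point N k =
    sum_f_R0 (fun j => if primitive_idx N j then Q2R (c j) * star_point N j else 0) N.
Proof.
  (* The argument does not need [1 < Nat.gcd k N]. *)
  intros HN Hk H2 _. change (primitive_span N (star_point N k)).
  set (d := Nat.gcd k N) in *.
  destruct (Nat.gcd_divide_l k N) as [a Ha]. destruct (Nat.gcd_divide_r k N) as [M HM].
  fold d in Ha, HM.
  assert (Hcop : Nat.gcd a M = 1%nat).
  { assert (E : (Nat.gcd a M * d = 1 * d)%nat)
      by (rewrite <- Nat.gcd_mul_mono_r, <- Ha, <- HM; fold d; lia).
    apply Nat.mul_cancel_r in E; lia. }
  assert (HM3 : (3 <= M)%nat).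
  { assert (Ha1 : (1 <= a)%nat) by (destruct a; lia).
    enough (2 * a < M)%nat by lia. apply (Nat.mul_lt_mono_pos_r d); lia. }
  rewrite star_point_tan_frac, Ha, Nat2Z.inj_mul, HM, tan_frac_mul by lia.
  apply (descent_mul _ (primitive_span_Qsubspace (M * d)) M d); [exact HM3 | lia | |].
  - apply primitive_span_contains_primitive_tan. nia.
  - rewrite <- Z_of_nat_gcd, Hcop. reflexivity.
Qed.
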